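(* Let $\eta>0$ and consider the network (NonAut-II-$\eta$) with species $\Lambda_1,\mathrm{I}_1,\Lambda_2,\mathrm{I}_2$ and reactions \[ 1:\ \eta\Lambda_1+\Lambda_2\to\eta\Lambda_1+\mathrm{I}_2,\quad 2:\ \mathrm{I}_2\to\Lambda_2,\quad 3:\ \eta\Lambda_2+\Lambda_1\to\eta\Lambda_2+\mathrm{I}_1,\quad 4:\ \mathrm{I}_1\to\Lambda_1, \] with the associated ODEs \[ \begin{cases} [\dot\Lambda_1]=-r_3([\Lambda_2],[\Lambda_1])+r_4([\mathrm{I}_1]),\\ [\dot{\mathrm I}_1]=r_3([\Lambda_2],[\Lambda_1])-r_4([\mathrm{I}_1]),\\ [\dot\Lambda_2]=-r_1([\Lambda_1],[\Lambda_2])+r_2([\mathrm{I}_2]),\\ [\dot{\mathrm I}_2]=r_1([\Lambda_1],[\Lambda_2])-r_2([\mathrm{I}_2]), \end{cases} \] where all rates are monotone chemical functions, under the kinetic symmetry constraints $r_1\equiv r_3\equiv r_o$ and $r_2\equiv r_4\equiv r_e$ (as functions of their ordered arguments). Let $\partial_1 r_o,\partial_2 r_o$ denote the derivatives of $r_o$ with respect to its first and second arguments and $\partial_I r_e$ the derivative of $r_e$, evaluated at a homogeneous steady state. Then the system has the capacity for zero-eigenvalue bifurcation and consequently differentiation, with bifurcation condition \[ \partial_2 r_o+\partial_I r_e=\partial_1 r_o, \] and the existence of an unstable (homogeneous) steady state requires $\partial_2 r_o+\partial_I r_e<\partial_1 r_o$. The unique associated instability motif, represented by a non-autocatalytic unstable-positive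 feedback, which generates the necessary instability is the subnetwork with species $\{\Lambda_1,\Lambda_2\}$ and reactions $\{1:\ \eta\Lambda_1+\Lambda_2\to\eta\Lambda_1+\dots,\ 3:\ \eta\Lambda_2+\Lambda_1\to\eta\Lambda_2+\dots\}$.
   Context: A rate function is monotone chemical if it is nonnegative, positive exactly when all its reactant concentrations are positive, independent of non-reactant concentrations, and has positive partial derivative in each reactant concentration at positive concentrations; kinetics are parameter-rich, so partial derivatives at a positive steady state can be prescribed as arbitrary positive numbers. The system has the conservation laws $[\Lambda_1]+[\mathrm I_1]$ and $[\Lambda_2]+[\mathrm I_2]$; capacity for zero-eigenvalue bifurcation means there exist admissible derivative values at a homogeneous positive steady state ($[\Lambda_1]=[\Lambda_2]$, $[\mathrm I_1]=[\mathrm I_2]$) for which the Jacobian restricted to the invariant set fixing these conserved quantities is singular. For a network with stoichiometric matrix $S_{mj}$ (net production of species $m$ in reaction $j$), a $k$-Child-Selection triple consists of $k$ species $\kappa$, $k$ reactions $E_\kappa$ and a bijection $J:\kappa\to E_\kappa$ such that each species in $\kappa$ is a reactant of its assigned reaction; its CS-matrix is $S[\kappa]_{ml}=S_{m,J(X_l)}$. An unstable-positive feedback is a $k\times k$ CS-matrix with $\operatorname{sign}\det=(-1)^{k-1}$ and no proper principal $k'\times k'$ submatrix with determinant of sign $(-1)^{k'-1}$; it is non-autocatalytic if it is not Metzler (some off-diagonal entry negative). Its instability motif is the subnetwork consisting of species $\kappa$ and reactions $E_\kappa$, disregarding other species. *)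

From HB Require Import structures.
From mathcomp Require Import all_boot all_order all_algebra.
From mathcomp Require Import complex.
Set Implicit Arguments. Unset Strict Implicit. Unset Printing Implicit Defensive.
Import Order.TTheory GRing.Theory Num.Theory.
Local Open Scope ring_scope.

(* Species (index in 'I_4):  Lambda1 = 0, I1 = 1, Lambda2 = 2, I2 = 3.
   Reactions (index in 'I_4): reaction 1 = 0, 2 = 1, 3 = 2, 4 = 3.
     1 : eta L1 + L2 -> eta L1 + I2
     2 : I2 -> L2
     3 : eta L2 + L1 -> eta L2 + I1
     4 : I1 -> L1                                                           *)

Definition sL1 : 'I_4 := @Ordinal 4 0 isT.
Definition sI1 : 'I_4 := @Ordinal 4 1 isT.
Definition sL2 : 'I_4 := @Ordinal 4 2 isT.
Definition sI2 : 'I_4 := @Ordinal 4 3 isT.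
Definition rx1 : 'I_4 := @Ordinal 4 0 isT.
Definition rx2 : 'I_4 := @Ordinal 4 1 isT.
Definition rx3 : 'I_4 := @Ordinal 4 2 isT.
Definition rx4 : 'I_4 := @Ordinal 4 3 isT.

Section Network.
Variable R : rcfType.

Definition reac_coef (eta : R) (m j : 'I_4) : R :=
  match nat_of_ord j, nat_of_ord m with
  | 0, 0 => eta | 0, 2 => 1
  | 1, 3 => 1
  | 2, 2 => eta | 2, 0 => 1
  | 3, 1 => 1
  | _, _ => 0
  end.

Definition prod_coef (eta : R) (m j : 'I_4) : R :=
  match nat_of_ord j, nat_of_ord m with
  | 0, 0 => eta | 0, 3 => 1
  | 1, 2 => 1
  | 2, 2 => eta | 2, 1 => 1
  | 3, 0 => 1
  | _, _ => 0
  end.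

Definition stoich (eta : R) : 'M[R]_4 :=
  \matrix_(m < 4, j < 4) (prod_coef eta m j - reac_coef eta m j).

Definition is_reactant (eta : R) (m j : 'I_4) : bool := 0 < reac_coef eta m j.

(* Admissible derivative values at a (homogeneous, positive) steady state:
   D j m = d r_j / d [m].  Monotone chemical + parameter-rich kinetics: the
   derivative is an arbitrary positive number when m is a reactant of j, and 0
   otherwise.  Kinetic symmetry r1 = r3 = r_o, r2 = r4 = r_e evaluated at a
   homogeneous steady state ([L1]=[L2], [I1]=[I2]) identifies
     d1 r_o = D 1 L1 = D 3 L2,  d2 r_o = D 1 L2 = D 3 L1,
     dI r_e = D 2 I2 = D 4 I1.                                              *)
Definition admissible (eta : R) (D : 'M[R]_4) : Prop :=
  [/\ forall j m, is_reactant eta m j -> 0 < D j m,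
      forall j m, ~~ is_reactant eta m j -> D j m = 0,
      D rx1 sL1 = D rx3 sL2,
      D rx1 sL2 = D rx3 sL1 &
      D rx2 sI2 = D rx4 sI1].

Definition d1_ro (D : 'M[R]_4) : R := D rx1 sL1.
Definition d2_ro (D : 'M[R]_4) : R := D rx1 sL2.
Definition dI_re (D : 'M[R]_4) : R := D rx2 sI2.

(* Jacobian of  x' = S r(x)  *)
Definition jac (eta : R) (D : 'M[R]_4) : 'M[R]_4 := stoich eta *m D.

(* tangent space of the invariant set fixing [L1]+[I1] and [L2]+[I2] *)
Definition tangent {T : nmodType} (v : 'cV[T]_4) : Prop :=
  v sL1 ord0 + v sI1 ord0 = 0 /\ v sL2 ord0 + v sI2 ord0 = 0.

Definition restr_singular (J : 'M[R]_4) : Prop :=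
  exists v : 'cV[R]_4, [/\ v != 0, tangent v & J *m v = 0].

Definition restr_unstable (J : 'M[R]_4) : Prop :=
  exists (lam : R[i]) (v : 'cV[R[i]]_4),
    [/\ v != 0, tangent v,
        map_mx (fun x : R => Complex x 0) J *m v = lam *: v &
        0 < complex.Re lam].

Definition CS_triple (eta : R) (k : nat) (kap Jf : 'I_k -> 'I_4) : Prop :=
  [/\ injective kap, injective Jf & forall l, is_reactant eta (kap l) (Jf l)].

Definition csmat (eta : R) (k : nat) (kap Jf : 'I_k -> 'I_4) : 'M[R]_k :=
  \matrix_(m < k, l < k) stoich eta (kap m) (Jf l).

Definition principal (k : nat) (M : 'M[R]_k) (A : {set 'I_k}) : 'M[R]_#|A| :=
  \matrix_(i < #|A|, j < #|A|) M (enum_val i) (enum_val j).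

Definition sign_unstable (n : nat) (M : 'M[R]_n) : Prop :=
  0 < (-1) ^+ n.-1 * \det M.

Definition unstable_positive (k : nat) (M : 'M[R]_k) : Prop :=
  [/\ (0 < k)%N, sign_unstable M &
      forall A : {set 'I_k}, (0 < #|A| < k)%N -> ~ sign_unstable (principal M A)].

(* non-autocatalytic = not Metzler *)
Definition non_autocatalytic (k : nat) (M : 'M[R]_k) : Prop :=
  exists i j, i != j /\ M i j < 0.

Definition motif_species (k : nat) (kap : 'I_k -> 'I_4) : {set 'I_4} :=
  [set kap l | l : 'I_k].
Definition motif_reactions (k : nat) (Jf : 'I_k -> 'I_4) : {set 'I_4} :=
  [set Jf l | l : 'I_k].

End Network.

From HB Require Import structures.
From mathcomp Require Import all_boot all_order all_algebra.
From mathcomp Require Import complex ring lra.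
Import Order.TTheory GRing.Theory Num.Theory.
Local Open Scope ring_scope.
Set Implicit Arguments. Unset Strict Implicit. Unset Printing Implicit Defensive.

(* Under the kinetic symmetry an admissible matrix of rate derivatives is fixed
   by three positive numbers a = d1 r_o, b = d2 r_o, c = dI r_e.  A vector
   tangent to the conservation laws has the form (x, -x, y, -y), on which the
   Jacobian acts as the symmetric matrix [[-(b+c), -a], [-a, -(b+c)]] on (x, y).
   Its eigenvalues are -(b+c) - a < 0 and a - (b+c), and both the singularity
   and the instability condition are read off the second one.
   An unstable-positive 2x2 CS-matrix has negative determinant, and a finite
   check shows that this forces the species {L1, L2} with the reactions
   {1, 3}, whose CS-matrix [[0, -1], [-1, 0]] is indeed unstable-positive.
   A CS-matrix of size at least three picks both species of one conserved
   pair (L_i, I_i), whose stoichiometric rows cancel, so its determinant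
   vanishes. *)

Lemma det_mx2 (R : comNzRingType) (A : 'M[R]_2) :
  \det A = A 0 0 * A 1 1 - A 0 1 * A 1 0.
Proof.
rewrite (expand_det_row _ ord0) !big_ord_recl big_ord0 /cofactor !det_mx11 !mxE /=.
rewrite addr0 expr0 expr1 !mul1r mulN1r mulrN.
have -> : lift ord0 ord0 = 1 :> 'I_2 by apply: val_inj.
by have -> : lift 1 0 = 0 :> 'I_2 by apply: val_inj.
Qed.

Lemma det_rows_opp (F : fieldType) n (M : 'M[F]_n) i1 i2 :
  i1 != i2 -> (forall j, M i1 j + M i2 j = 0) -> \det M = 0.
Proof.
move=> i12 M0; apply/eqP/det0P; exists (delta_mx 0 i1 + delta_mx 0 i2).
  apply/negP => /eqP/matrixP/(_ 0 i1).
  by rewrite !mxE !eqxx (negbTE i12) addr0 => /eqP; rewrite oner_eq0.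
by rewrite mulmxDl -!rowE; apply/matrixP => i j; rewrite !mxE M0.
Qed.

Lemma eigenvalue_sym_mx2 (F : numDomainType) (p q lam x y : F) :
  (x != 0) || (y != 0) -> p * x + q * y = lam * x -> q * x + p * y = lam * y ->
  lam = p + q \/ lam = p - q.
Proof.
move=> xy0 e1 e2.
have sum0 : (lam - (p + q)) * (x + y) = 0.
  by rewrite -[RHS](subrr (lam * x + lam * y)) -{2}e1 -{2}e2; ring.
have diff0 : (lam - (p - q)) * (x - y) = 0.
  by rewrite -[RHS](subrr (lam * x - lam * y)) -{2}e1 -{2}e2; ring.
move/eqP: sum0; rewrite mulf_eq0 subr_eq0 => /orP[/eqP|/eqP xy]; first by left.
move/eqP: diff0; rewrite mulf_eq0 subr_eq0 => /orP[/eqP|/eqP x_y]; first by right.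
have /eqP : x *+ 2 = 0 by rewrite -[RHS](addr0 0) -{1}xy -x_y; ring.
rewrite mulrn_eq0 /= => /eqP x0.
have y0 : y = 0 by move: xy; rewrite x0 add0r.
by move: xy0; rewrite x0 y0 eqxx.
Qed.

Lemma card_setC2_le (T : finType) (A : {set T}) p q :
  p != q -> p \notin A -> q \notin A -> (#|A| <= #|T| - 2)%N.
Proof.
move=> pq pA qA; have /subset_leq_card : A \subset ~: [set p; q].
  apply/subsetP => x xA; rewrite !inE negb_or.
  by apply/andP; split; apply: contraTneq xA => ->.
by rewrite -(cardsC [set p; q]) cards2 pq addKn.
Qed.

Lemma ord2_ind (P : 'I_2 -> Prop) : P 0 -> P 1 -> forall i, P i.
Proof.
move=> P0 P1 [[|[|i]] lti] //.
- by have -> : Ordinal lti = 0 by apply: val_inj.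
- by have -> : Ordinal lti = 1 by apply: val_inj.
Qed.

Lemma imset_ord2 (T : finType) (f : 'I_2 -> T) : [set f l | l : 'I_2] = [set f 0; f 1].
Proof.
apply/setP => x; apply/imsetP/set2P => [[l _ ->]|[] ->].
- by elim/ord2_ind: l; [left|right].
- by exists 0.
- by exists 1.
Qed.

Lemma set2_swap (T : finType) (x y p q : T) :
  (x == p) && (y == q) || (x == q) && (y == p) -> [set x; y] = [set p; q].
Proof. by case/orP => /andP[/eqP -> /eqP ->]; rewrite // setUC. Qed.

Lemma ord4_ind (P : 'I_4 -> Prop) :
  P sL1 -> P sI1 -> P sL2 -> P sI2 -> forall i, P i.
Proof.
move=> P0 P1 P2 P3 [[|[|[|[|i]]]] lti] //.
- by have -> : Ordinal lti = sL1 by apply: val_inj.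
- by have -> : Ordinal lti = sI1 by apply: val_inj.
- by have -> : Ordinal lti = sL2 by apply: val_inj.
- by have -> : Ordinal lti = sI2 by apply: val_inj.
Qed.

Lemma sum_ord4 (V : nmodType) (f : 'I_4 -> V) :
  \sum_(i < 4) f i = f sL1 + f sI1 + f sL2 + f sI2.
Proof.
by rewrite !big_ord_recl big_ord0 addr0 !addrA; repeat f_equal; apply: val_inj.
Qed.

(* The catalysts eta L1, eta L2 appear on both sides of reactions 1 and 3, so
   the net stoichiometry does not depend on eta. *)
Definition stoichZ (m j : 'I_4) : int :=
  match nat_of_ord j, nat_of_ord m with
  | 0, 2 => -1 | 0, 3 => 1
  | 1, 2 => 1 | 1, 3 => -1
  | 2, 0 => -1 | 2, 1 => 1
  | 3, 0 => 1 | 3, 1 => -1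
  | _, _ => 0
  end.

Definition reactantb (m j : 'I_4) : bool :=
  match nat_of_ord j, nat_of_ord m with
  | 0, 0 | 0, 2 | 1, 3 | 2, 2 | 2, 0 | 3, 1 => true
  | _, _ => false
  end.

Lemma stoichZ_conservation j :
  stoichZ sL1 j + stoichZ sI1 j = 0 /\ stoichZ sL2 j + stoichZ sI2 j = 0.
Proof. by elim/ord4_ind: j. Qed.

Definition sym_jac (F : nzRingType) (a b c : F) : 'M[F]_4 :=
  \matrix_(m, n)
    match nat_of_ord m, nat_of_ord n with
    | 0, 0 => - b | 0, 1 => c | 0, 2 => - a
    | 1, 0 => b | 1, 1 => - c | 1, 2 => a
    | 2, 0 => - a | 2, 2 => - b | 2, 3 => c
    | 3, 0 => a | 3, 2 => b | 3, 3 => - c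
    | _, _ => 0
    end.

Lemma map_sym_jac (F K : nzRingType) (f : {rmorphism F -> K}) (a b c : F) :
  map_mx f (sym_jac a b c) = sym_jac (f a) (f b) (f c).
Proof.
apply/matrixP => i j; rewrite !mxE.
by elim/ord4_ind: i; elim/ord4_ind: j; rewrite /= ?rmorph0 ?rmorphN.
Qed.

Definition tangent_col (F : nzRingType) (x y : F) : 'cV[F]_4 :=
  \col_i match nat_of_ord i with 0 => x | 1 => - x | 2 => y | _ => - y end.

Section TangentSpace.
Variable F : nzRingType.
Implicit Types (x y : F) (v : 'cV[F]_4).

Lemma tangent_col_tangent x y : tangent (tangent_col x y).
Proof. by split; rewrite !mxE /= subrr. Qed.

Lemma tangent_colE v : tangent v -> v = tangent_col (v sL1 0) (v sL2 0).
Proof.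
case=> t1 t2; apply/matrixP => i j; rewrite (ord1 j) !mxE.
elim/ord4_ind: i => //=; apply/eqP.
- by rewrite -addr_eq0 addrC t1.
- by rewrite -addr_eq0 addrC t2.
Qed.

Lemma tangent_col_inj x y x' y' :
  tangent_col x y = tangent_col x' y' -> x = x' /\ y = y'.
Proof.
by move/matrixP => e; split; [have := e sL1 0 | have := e sL2 0]; rewrite !mxE.
Qed.

Lemma tangent_col_eq0 x y : (tangent_col x y == 0) = (x == 0) && (y == 0).
Proof.
apply/eqP/andP => [/matrixP e|[/eqP-> /eqP->]].
  by split; apply/eqP; [have := e sL1 0 | have := e sL2 0]; rewrite !mxE.
by apply/matrixP => i j; rewrite !mxE; elim/ord4_ind: i; rewrite /= ?oppr0.
Qed.

Lemma scale_tangent_col lam x y :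
  lam *: tangent_col x y = tangent_col (lam * x) (lam * y).
Proof. by apply/matrixP => i j; rewrite !mxE; elim/ord4_ind: i; rewrite /= ?mulrN. Qed.

End TangentSpace.

Lemma sym_jac_tangent_col (F : comNzRingType) (a b c x y : F) :
  sym_jac a b c *m tangent_col x y =
  tangent_col (- (b + c) * x + - a * y) (- a * x + - (b + c) * y).
Proof.
apply/matrixP => i j; rewrite !mxE sum_ord4 !mxE.
by elim/ord4_ind: i => /=; ring.
Qed.

Lemma sym_jac_eigenvalue (F : numDomainType) (a b c lam : F) (v : 'cV[F]_4) :
  v != 0 -> tangent v -> sym_jac a b c *m v = lam *: v ->
  lam = - (b + c) - a \/ lam = a - (b + c).
Proof.
move=> + /tangent_colE vE; rewrite vE; set x := v sL1 0; set y := v sL2 0.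
rewrite tangent_col_eq0 negb_and sym_jac_tangent_col scale_tangent_col.
move=> xy0 /tangent_col_inj[e1 e2].
by have [->|->] := eigenvalue_sym_mx2 xy0 e1 e2; [left | right; rewrite opprK addrC].
Qed.

Section SymmetricKinetics.
Variables (R : rcfType) (eta : R).
Hypothesis eta_gt0 : 0 < eta.

Lemma stoichE m j : stoich eta m j = (stoichZ m j)%:~R.
Proof.
by rewrite mxE; elim/ord4_ind: m; elim/ord4_ind: j; rewrite /= ?subrr ?subr0 ?sub0r.
Qed.

Lemma is_reactantE m j : is_reactant eta m j = reactantb m j.
Proof.
by rewrite /is_reactant; elim/ord4_ind: m; elim/ord4_ind: j; rewrite /= ?ltxx ?ltr01.
Qed.

Definition sym_rates (a b c : R) : 'M[R]_4 :=
  \matrix_(j, m)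
    match nat_of_ord j, nat_of_ord m with
    | 0, 0 => a | 0, 2 => b | 1, 3 => c | 2, 0 => b | 2, 2 => a | 3, 1 => c
    | _, _ => 0
    end.

Lemma jac_sym_rates a b c : jac eta (sym_rates a b c) = sym_jac a b c.
Proof.
apply/matrixP => m n; rewrite /jac [LHS]mxE sum_ord4 !stoichE !mxE.
by rewrite /stoichZ; elim/ord4_ind: m; elim/ord4_ind: n => /=; ring.
Qed.

Lemma admissible_sym_rates a b c :
  0 < a -> 0 < b -> 0 < c -> admissible eta (sym_rates a b c).
Proof.
move=> a_gt0 b_gt0 c_gt0; split; rewrite ?mxE // => j m; rewrite is_reactantE mxE;
  by elim/ord4_ind: m; elim/ord4_ind: j.
Qed.

Lemma admissibleE D : admissible eta D -> D = sym_rates (d1_ro D) (d2_ro D) (dI_re D).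
Proof.
case=> _ D0 e1 e2 e3; apply/matrixP => j m; rewrite mxE.
by elim/ord4_ind: m; elim/ord4_ind: j => //=; apply: D0; rewrite is_reactantE.
Qed.

Lemma admissible_gt0 D : admissible eta D -> [/\ 0 < d1_ro D, 0 < d2_ro D & 0 < dI_re D].
Proof. by case=> D_gt0 _ _ _ _; split; apply: D_gt0; rewrite is_reactantE. Qed.

End SymmetricKinetics.

Section Spectrum.
Variable R : rcfType.
Implicit Types a b c : R.

Lemma restr_singular_sym_jac a b c : 0 < a -> 0 < b -> 0 < c ->
  restr_singular (sym_jac a b c) <-> b + c = a.
Proof.
move=> a_gt0 b_gt0 c_gt0; split=> [[v [v0 tv]] | abc].
  by rewrite -(scale0r v) => /(sym_jac_eigenvalue v0 tv) []; lra.
exists (tangent_col 1 (-1)); split; first by rewrite tangent_col_eq0 oner_eq0.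
  exact: tangent_col_tangent.
apply/eqP; rewrite sym_jac_tangent_col tangent_col_eq0 -abc.
by apply/andP; split; apply/eqP; ring.
Qed.

Lemma restr_unstable_sym_jac a b c : 0 < a -> 0 < b -> 0 < c ->
  restr_unstable (sym_jac a b c) -> b + c < a.
Proof.
move=> a_gt0 b_gt0 c_gt0 [lam [v [v0 tv]]].
have -> : map_mx (fun x => Complex x 0) (sym_jac a b c) =
          map_mx (real_complex R) (sym_jac a b c) by [].
rewrite map_sym_jac => /(sym_jac_eigenvalue v0 tv) [] ->;
  rewrite -?(rmorphN, rmorphB, rmorphD) /=; lra.
Qed.

End Spectrum.

Lemma conserved_pair_sub (A : {set 'I_4}) : (2 < #|A|)%N ->
  (sL1 \in A) && (sI1 \in A) || (sL2 \in A) && (sI2 \in A).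
Proof.
apply: contraTT; rewrite negb_or !negb_and -leqNgt => /andP[/orP h1 /orP h2].
have le2 := @card_setC2_le _ A; rewrite card_ord in le2.
by case: h1 => h1; case: h2 => h2; apply: (le2 _ _ _ h1 h2).
Qed.

Lemma unstable_pair_pattern (k0 k1 j0 j1 : 'I_4) :
  reactantb k0 j0 -> reactantb k1 j1 -> k0 != k1 -> j0 != j1 ->
  (stoichZ k0 j0 * stoichZ k1 j1 < stoichZ k0 j1 * stoichZ k1 j0)%R ->
  ((k0 == sL1) && (k1 == sL2) || (k0 == sL2) && (k1 == sL1)) &&
  ((j0 == rx1) && (j1 == rx3) || (j0 == rx3) && (j1 == rx1)).
Proof. by elim/ord4_ind: k0; elim/ord4_ind: k1; elim/ord4_ind: j0; elim/ord4_ind: j1. Qed.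

Section InstabilityMotif.
Variables (R : rcfType) (eta : R).
Hypothesis eta_gt0 : 0 < eta.

Lemma csmatE k (kap Jf : 'I_k -> 'I_4) i l :
  csmat eta kap Jf i l = (stoichZ (kap i) (Jf l))%:~R.
Proof. by rewrite mxE stoichE. Qed.

Lemma det_csmat_conserved k (kap Jf : 'I_k -> 'I_4) m1 m2 p q :
  p != q -> (forall j, stoichZ p j + stoichZ q j = 0) -> kap m1 = p -> kap m2 = q ->
  \det (csmat eta kap Jf) = 0.
Proof.
move=> pq pq0 e1 e2; apply: (@det_rows_opp _ _ _ m1 m2).
  by apply: contraNneq pq => m12; rewrite -e1 -e2 m12.
by move=> l; rewrite !csmatE e1 e2 -intrD pq0.
Qed.

Lemma det_csmat_large k (kap Jf : 'I_k -> 'I_4) :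
  injective kap -> (2 < k)%N -> \det (csmat eta kap Jf) = 0.
Proof.
move=> kap_inj k_gt2.
have /conserved_pair_sub : (2 < #|motif_species kap|)%N by rewrite card_imset // card_ord.
case/orP => /andP[/imsetP[m1 _ e1] /imsetP[m2 _ e2]];
  apply: (det_csmat_conserved Jf _ _ (esym e1) (esym e2)) => // j;
  by have [] := stoichZ_conservation j.
Qed.

Lemma det_principal_card1 k (M : 'M[R]_k) (A : {set 'I_k}) :
  (forall i, M i i = 0) -> #|A| = 1%N -> \det (principal M A) = 0.
Proof.
move=> M0 A1; have /cards1P[x Ax] : #|A| == 1%N by rewrite A1.
have xA y : y \in A -> y = x by rewrite Ax inE => /eqP.
have -> : principal M A = 0.
  by apply/matrixP => i j; rewrite !mxE (xA _ (enum_valP i)) (xA _ (enum_valP j)) M0.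
by move: #|A| A1 => [|n] // _; rewrite det0.
Qed.

Lemma sign_unstable_csmat2 (kap Jf : 'I_2 -> 'I_4) :
  sign_unstable (csmat eta kap Jf) <->
  (stoichZ (kap 0) (Jf 0) * stoichZ (kap 1) (Jf 1) <
   stoichZ (kap 0) (Jf 1) * stoichZ (kap 1) (Jf 0))%R.
Proof.
by rewrite /sign_unstable det_mx2 !csmatE expr1 mulN1r oppr_gt0 subr_lt0 -!intrM ltr_int.
Qed.

Definition motif_kap (l : 'I_2) : 'I_4 := if l == 0 then sL1 else sL2.
Definition motif_rx (l : 'I_2) : 'I_4 := if l == 0 then rx1 else rx3.

Lemma instability_motif_exists : exists (k : nat) (kap Jf : 'I_k -> 'I_4),
  [/\ CS_triple eta kap Jf, unstable_positive (csmat eta kap Jf),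
      non_autocatalytic (csmat eta kap Jf),
      motif_species kap = [set sL1; sL2] & motif_reactions Jf = [set rx1; rx3]].
Proof.
exists 2%N, motif_kap, motif_rx; split.
- split; try by move=> l1 l2; elim/ord2_ind: l1; elim/ord2_ind: l2 => // /(congr1 val).
  by move=> l; rewrite is_reactantE //; elim/ord2_ind: l.
- split=> // [|A /andP[A_gt0 A_lt2]].
    exact/sign_unstable_csmat2.
  rewrite /sign_unstable det_principal_card1 ?mulr0 ?ltxx //.
    by move=> i; rewrite csmatE; elim/ord2_ind: i.
  by apply/eqP; rewrite eqn_leq -ltnS A_lt2.
- by exists 0, 1; rewrite csmatE ltrz0.
- exact: imset_ord2.
- exact: imset_ord2.
Qed.

Lemma csmat2_motif (kap Jf : 'I_2 -> 'I_4) :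
  CS_triple eta kap Jf -> sign_unstable (csmat eta kap Jf) ->
  motif_species kap = [set sL1; sL2] /\ motif_reactions Jf = [set rx1; rx3].
Proof.
case=> kap_inj Jf_inj reac /sign_unstable_csmat2.
move: (reac 0) (reac 1); rewrite !is_reactantE // => r0 r1 det_lt0.
have kap01 : kap 0 != kap 1 by rewrite (inj_eq kap_inj).
have Jf01 : Jf 0 != Jf 1 by rewrite (inj_eq Jf_inj).
have /andP[kap_pat Jf_pat] := unstable_pair_pattern r0 r1 kap01 Jf01 det_lt0.
by rewrite /motif_species /motif_reactions !imset_ord2; split; apply: set2_swap.
Qed.

Lemma instability_motif_unique (k : nat) (kap Jf : 'I_k -> 'I_4) :
  CS_triple eta kap Jf -> unstable_positive (csmat eta kap Jf) ->
  non_autocatalytic (csmat eta kap Jf) ->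
  motif_species kap = [set sL1; sL2] /\ motif_reactions Jf = [set rx1; rx3].
Proof.
move=> cs [k_gt0 unstable _] [i [j [ij _]]].
case: k => [|[|[|k]]] // in k_gt0 kap Jf cs unstable i j ij *.
- by rewrite (ord1 i) (ord1 j) eqxx in ij.
- exact: csmat2_motif.
- case: cs => kap_inj _ _.
  by rewrite /sign_unstable det_csmat_large ?mulr0 ?ltxx in unstable.
Qed.

End InstabilityMotif.

Unset Implicit Arguments.

Theorem proposition4p4 (R : rcfType) (eta : R) (heta : 0 < eta) :
  [/\ (* capacity for zero-eigenvalue bifurcation *)
      (exists D : 'M[R]_4, admissible eta D /\ restr_singular (jac eta D)),
      (* bifurcation condition *)
      (forall D : 'M[R]_4, admissible eta D ->
         (restr_singular (jac eta D) <-> d2_ro D + dI_re D = d1_ro D)),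
      (* instability requires d2 r_o + dI r_e < d1 r_o *)
      (forall D : 'M[R]_4, admissible eta D ->
         restr_unstable (jac eta D) -> d2_ro D + dI_re D < d1_ro D),
      (* existence of the instability motif {L1, L2}, {1, 3} *)
      (exists (k : nat) (kap Jf : 'I_k -> 'I_4),
         [/\ CS_triple eta kap Jf,
             unstable_positive (csmat eta kap Jf),
             non_autocatalytic (csmat eta kap Jf),
             motif_species kap = [set sL1; sL2] &
             motif_reactions Jf = [set rx1; rx3]]) &
      (* uniqueness of the instability motif *)
      (forall (k : nat) (kap Jf : 'I_k -> 'I_4),
         CS_triple eta kap Jf ->
         unstable_positive (csmat eta kap Jf) ->
         non_autocatalytic (csmat eta kap Jf) ->
         motif_species kap = [set sL1; sL2] /\
         motif_reactions Jf = [set rx1; rx3])].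
Proof.
split.
- exists (sym_rates 2 1 1); split; first by apply: admissible_sym_rates; lra.
  by rewrite jac_sym_rates; apply/restr_singular_sym_jac; lra.
- move=> D D_adm; have [a_gt0 b_gt0 c_gt0] := admissible_gt0 heta D_adm.
  by rewrite {1}(admissibleE heta D_adm) jac_sym_rates; exact: restr_singular_sym_jac.
- move=> D D_adm; have [a_gt0 b_gt0 c_gt0] := admissible_gt0 heta D_adm.
  by rewrite {1}(admissibleE heta D_adm) jac_sym_rates; exact: restr_unstable_sym_jac.
- exact: instability_motif_exists.
- exact: instability_motif_unique.
Qed.
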